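(* For every positive integer $n$, $\mathrm{Sort}_n(\mathrm{SC}_{3\underline{21}})=\mathrm{Av}_n(123,132)$, the set of permutations in $\mathfrak S_n$ avoiding both classical patterns $123$ and $132$.
   Context: $\mathfrak S_n$ is the set of permutations of $\{1,\dots,n\}$. A vincular pattern is a permutation with some entries underlined; a sequence contains it if it has a subsequence with the same relative order in which entries corresponding to adjacent underlined entries occupy consecutive positions. An occurrence of $3\underline{21}$ is $a_i a_j a_{j+1}$ with $i<j$ and $a_{j+1}<a_j<a_i$. Classical patterns have no underlining. For a pattern $\sigma$, the map $\mathrm{SC}_\sigma$ acts on $\tau$: read entries left to right; when the next entry $x$ is read, if pushing $x$ yields a stack whose entries read top to bottom (stack adjacency = consecutive positions) avoid $\sigma$, push $x$; otherwise pop the top stack entry to the output and repeat. At the end pop all remaining entries; the output is $\mathrm{SC}_\sigma(\tau)$. West's stack-sorting map is $s=\mathrm{SC}_{21}$. $\mathrm{Sort}_n(\mathrm{SC}_\sigma)=\{\tau\in\mathfrak S_n : s(\mathrm{SC}_\sigma(\tau))=12\cdots n\}$. *)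

(* Permutations of {1..n} are represented as sequences of
   naturals that are permutations (perm_eq) of [:: 1; ...; n]. *)
From mathcomp Require Import all_boot.
Set Implicit Arguments. Unset Strict Implicit. Unset Printing Implicit Defensive.

(* A vincular pattern: a permutation [p] (as a seq) together with a list [adj]
   of positions k (0-indexed) such that entries k and k+1 of [p] are
   underlined-adjacent, i.e. must occupy consecutive positions. *)

Definition vocc (p adj s idx : seq nat) : bool :=
  [&& size idx == size p,
      all (fun i => i < size s) idx,
      sorted ltn idx,
      all (fun k => nth 0 idx k.+1 == (nth 0 idx k).+1) adj &
      all (fun i => all (fun j =>
          (nth 0 s (nth 0 idx i) < nth 0 s (nth 0 idx j)) ==
          (nth 0 p i < nth 0 p j)) (iota 0 (size p))) (iota 0 (size p))].

Fixpoint subsq (k : nat) (l : seq nat) : seq (seq nat) :=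
  match l with
  | [::] => if k is 0 then [:: [::]] else [::]
  | x :: l' => if k is k'.+1 then map (cons x) (subsq k' l') ++ subsq k l'
               else [:: [::]]
  end.

Definition vcontains (p adj s : seq nat) : bool :=
  has (vocc p adj s) (subsq (size p) (iota 0 (size s))).

Definition contains (p s : seq nat) : bool := vcontains p [::] s.
Definition avoids (p s : seq nat) : bool := ~~ contains p s.

(* The pattern-avoiding stack machine SC_sigma, with sigma = (p, adj).
   Stacks are stored as sequences read from top to bottom. *)
Fixpoint push_loop (p adj : seq nat) (x : nat) (st out : seq nat)
  : seq nat * seq nat :=
  if ~~ vcontains p adj (x :: st) then (x :: st, out) else
  match st with
  | [::] => ([:: x], out)
  | y :: st' => push_loop p adj x st' (rcons out y)
  end.

Fixpoint SC_aux (p adj : seq nat) (t st out : seq nat) : seq nat :=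
  match t with
  | [::] => out ++ st
  | x :: t' => let: (st', out') := push_loop p adj x st out in
               SC_aux p adj t' st' out'
  end.

Definition SC (p adj : seq nat) (t : seq nat) : seq nat := SC_aux p adj t [::] [::].

Definition west_s (t : seq nat) : seq nat := SC [:: 2; 1] [::] t.

Definition SC_3_21 (t : seq nat) : seq nat := SC [:: 3; 2; 1] [:: 1] t.

Definition in_Sort_n (n : nat) (t : seq nat) : bool :=
  perm_eq t (iota 1 n) && (west_s (SC_3_21 t) == iota 1 n).

Definition in_Av_n_123_132 (n : nat) (t : seq nat) : bool :=
  [&& perm_eq t (iota 1 n), avoids [:: 1; 2; 3] t & avoids [:: 1; 3; 2] t].

(* A permutation avoids 123 and 132 iff no entry has two larger entries to
   its right.  We induct on t, adding a first entry a: it is pushed first and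
   stays at the bottom of the stack of SC_{3_21}, because an incoming entry
   only pops smaller entries.  So a is output last.
   If at most one later entry exceeds a, then a never takes part in a 3_21
   occurrence, SC(a t) = SC(t) a, and appending a to the input of s does not
   change sortability.
   If two later entries y < m exceed a, with m maximal, then m is never popped
   before the end, and y never lies below m: when m is pushed, the entries
   under it must increase towards the bottom entry a < y.  So SC(a t) reads
   ... y ... m ... a, and s outputs y when m arrives, before a. *)

From mathcomp Require Import all_boot zify.
Set Implicit Arguments. Unset Strict Implicit. Unset Printing Implicit Defensive.

Lemma mem_subsq_iota m n idx : sorted ltn idx ->
  all (fun i => m <= i < m + n) idx -> idx \in subsq (size idx) (iota m n).
Proof.
elim: n m idx => [|n IHn] m [|i idx] //=; first by rewrite addn0; lia.
move=> sorted_idx /andP[i_in idx_in].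
have idx_above j : j \in idx -> i < j /\ j < m + n.+1.
  move=> j_in; have /allP/(_ j j_in) : all (ltn i) idx := order_path_min ltn_trans sorted_idx.
  by move/allP: idx_in => /(_ j j_in) /=; lia.
rewrite mem_cat; apply/orP; case: (ltnP m i) => [lt_mi|le_im].
  right; apply: (IHn _ (i :: idx)) => //=; apply/andP; split; first lia.
  by apply/allP => j /idx_above; lia.
have -> : i = m by lia.
left; apply/map_f/IHn; first exact: path_sorted sorted_idx.
by apply/allP => j /idx_above; lia.
Qed.

Lemma vcontainsP p adj s : reflect (exists idx, vocc p adj s idx) (vcontains p adj s).
Proof.
apply: (iffP hasP) => [[idx _ occ]|[idx occ]]; first by exists idx.
exists idx => //; move: (occ) => /and5P[/eqP <- idx_lt sorted_idx _ _].
by apply: mem_subsq_iota => //; apply/allP => i /(allP idx_lt); lia.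
Qed.

Definition has_3_21 (s : seq nat) : Prop := exists i j,
  [/\ i < j, j.+1 < size s, nth 0 s j < nth 0 s i & nth 0 s j.+1 < nth 0 s j].

Definition has_triple (P : nat -> nat -> nat -> bool) (s : seq nat) : Prop :=
  exists i j k, [/\ i < j, j < k, k < size s & P (nth 0 s i) (nth 0 s j) (nth 0 s k)].

Lemma vcontains_3_21 s : vcontains [:: 3; 2; 1] [:: 1] s <-> has_3_21 s.
Proof.
split=> [/vcontainsP [[|i [|j [|k [|? ?]]]]]|[i [j [*]]]]; rewrite /vocc /= ?andbF //.
  rewrite !andbT => occ; have /eqP k_adj : k == j.+1 by case/and5P: occ.
  by subst k; exists i, j; split; lia.
by apply/vcontainsP; exists [:: i; j; j.+1]; rewrite /vocc /= !andbT; lia.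
Qed.

Lemma contains_123 s :
  contains [:: 1; 2; 3] s <-> has_triple (fun x y z => (x < y) && (y < z)) s.
Proof.
split=> [/vcontainsP [[|i [|j [|k [|? ?]]]]]|[i [j [k [*]]]]]; rewrite /vocc /= ?andbF //.
  by rewrite !andbT => occ; exists i, j, k; split; lia.
by apply/vcontainsP; exists [:: i; j; k]; rewrite /vocc /= !andbT; lia.
Qed.

Lemma contains_132 s :
  contains [:: 1; 3; 2] s <-> has_triple (fun x y z => (x < z) && (z < y)) s.
Proof.
split=> [/vcontainsP [[|i [|j [|k [|? ?]]]]]|[i [j [k [*]]]]]; rewrite /vocc /= ?andbF //.
  by rewrite !andbT => occ; exists i, j, k; split; lia.
by apply/vcontainsP; exists [:: i; j; k]; rewrite /vocc /= !andbT; lia.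
Qed.

Lemma exists_descent (s : seq nat) : ~~ sorted leq s ->
  exists j, j.+1 < size s /\ nth 0 s j.+1 < nth 0 s j.
Proof.
elim: s => [|x s IHs] //=; case: s IHs => [|y s] IHs //=.
case: (leqP x y) => cmp_xy /=; last by exists 0.
by move=> /IHs [j desc]; exists j.+1.
Qed.

Lemma vcontains_21 s : vcontains [:: 2; 1] [::] s = ~~ sorted leq s.
Proof.
apply/idP/idP => [/vcontainsP [[|i [|j [|? ?]]]]|/exists_descent [j desc]];
  rewrite /vocc /= ?andbF //.
  rewrite !andbT => occ; apply/negP => /(sorted_leq_nth leq_trans leqnn 0).
  by move=> /(_ i j); rewrite !inE; lia.
by apply/vcontainsP; exists [:: j; j.+1]; rewrite /vocc /= !andbT; lia.
Qed.

Lemma count_gt1P (T : eqType) (x0 : T) (P : pred T) s : reflect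
  (exists j k, [/\ j < k, k < size s, P (nth x0 s j) & P (nth x0 s k)])
  (1 < count P s).
Proof.
apply: (iffP idP) => [|[j [k [lt_jk lt_ks Pj Pk]]]].
  elim: s => [|x s IHs] //=; case Px: (P x) => /=; last first.
    by move=> /IHs [j [k [*]]]; exists j.+1, k.+1.
  rewrite add1n ltnS -has_count => /hasP [y y_in Py].
  exists 0, (index y s).+1; split => //=; first by rewrite ltnS index_mem.
  by rewrite nth_index.
have has_take : has P (take k s).
  apply/hasP; exists (nth x0 s j) => //.
  by rewrite -(nth_take x0 lt_jk) mem_nth // size_takel // ltnW.
rewrite -(cat_take_drop k s) count_cat (drop_nth x0 lt_ks) /= Pk.
by move: has_take; rewrite has_count; lia.
Qed.

Fixpoint exceeded_twice (s : seq nat) : bool :=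
  if s is x :: s' then exceeded_twice s' || (1 < count (fun y => x < y) s') else false.

Lemma exceeded_twiceP s :
  has_triple (fun x y z => (x < y) && (x < z)) s <-> exceeded_twice s.
Proof.
elim: s => [|x s IHs] /=; first by split => // [[i [j [k [*]]]]].
split=> [[[|i] [[|j] [[|k] [lt_ij lt_jk lt_ks /= /andP[lt_y lt_z]]]]]|] //.
- by apply/orP; right; apply/(count_gt1P 0); exists j, k; split.
- by apply/orP; left; apply/IHs; exists i, j, k; split => //; apply/andP.
case/orP => [/IHs [i [j [k [*]]]]|/(count_gt1P 0) [j [k [*]]]].
  by exists i.+1, j.+1, k.+1.
by exists 0, j.+1, k.+1; split => //=; apply/andP.
Qed.

Lemma contains_123_132 s : uniq s ->
  (contains [:: 1; 2; 3] s || contains [:: 1; 3; 2] s) = exceeded_twice s.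
Proof.
move=> uniq_s; apply/idP/idP.
  case/orP => [/contains_123|/contains_132] [i [j [k [? ? ? /andP[? ?]]]]];
    by apply/exceeded_twiceP; exists i, j, k; split => //; apply/andP; split; lia.
move/exceeded_twiceP => [i [j [k [lt_ij lt_jk lt_ks /andP[lt_y lt_z]]]]].
have : nth 0 s j != nth 0 s k by rewrite nth_uniq ?neq_ltn ?lt_jk //; apply: ltn_trans lt_ks.
case: ltngtP => // cmp _; apply/orP; [left; apply/contains_123|right; apply/contains_132];
  by exists i, j, k; split => //; apply/andP.
Qed.

Definition SC_run p adj (t st out : seq nat) : seq nat * seq nat :=
  foldl (fun so x => push_loop p adj x so.1 so.2) (st, out) t.

Lemma SC_auxE p adj t st out :
  SC_aux p adj t st out = (SC_run p adj t st out).2 ++ (SC_run p adj t st out).1.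
Proof.
elim: t st out => [|x t IHt] st out //=.
by rewrite /SC_run /=; case: push_loop => st' out'; apply: IHt.
Qed.

Lemma SC_run_cons p adj x t st out st' out' :
  push_loop p adj x st out = (st', out') ->
  SC_run p adj (x :: t) st out = SC_run p adj t st' out'.
Proof. by move=> push_x; rewrite /SC_run /= push_x. Qed.

Lemma SC_run_cat p adj t1 t2 st out :
  SC_run p adj (t1 ++ t2) st out =
  SC_run p adj t2 (SC_run p adj t1 st out).1 (SC_run p adj t1 st out).2.
Proof. by rewrite /SC_run foldl_cat; case: (foldl _ _ t1). Qed.

Lemma push_loopP p adj x st out : exists k, [/\ k <= size st,
  push_loop p adj x st out = (x :: drop k st, out ++ take k st),
  k < size st -> ~~ vcontains p adj (x :: drop k st) &
  forall k', k' < k -> vcontains p adj (x :: drop k' st)].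
Proof.
elim: st out => [|y st IHst] out /=; first by exists 0; rewrite cats0; case: ifP.
case: ifP => [avoid|contain]; first by exists 0; rewrite cats0 drop0.
have [k [le_k -> avoid_k pop_k]] := IHst (rcons out y).
exists k.+1; split => //; first by rewrite cat_rcons.
by case=> [|k'] lt_k'k /=; [exact: negbFE contain | apply: pop_k].
Qed.

Lemma push_loop_perm p adj x st out :
  perm_eq ((push_loop p adj x st out).2 ++ (push_loop p adj x st out).1)
          (out ++ st ++ [:: x]).
Proof.
have [k [_ -> _ _]] := push_loopP p adj x st out.
rewrite /= -catA perm_cat2l -{3}(cat_take_drop k st) -catA perm_cat2l.
by rewrite cats1 perm_sym perm_rcons.
Qed.

Lemma SC_run_perm p adj t st out :
  perm_eq ((SC_run p adj t st out).2 ++ (SC_run p adj t st out).1) (out ++ st ++ t).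
Proof.
elim: t st out => [|x t IHt] st out; first by rewrite /SC_run /= cats0.
have := push_loop_perm p adj x st out.
case: push_loop (@SC_run_cons p adj x t st out) => st' out' /(_ st' out' erefl) -> perm_x.
apply: perm_trans (IHt st' out') _.
by rewrite catA -cat1s !catA perm_cat2r -catA.
Qed.

Lemma SC_perm p adj t : perm_eq (SC p adj t) t.
Proof. by rewrite /SC SC_auxE; apply: perm_trans (SC_run_perm _ _ _ _ _) _. Qed.

Lemma SC_run_out p adj t st out :
  exists u, (SC_run p adj t st out).2 = out ++ u.
Proof.
elim: t st out => [|x t IHt] st out; first by exists [::]; rewrite /SC_run cats0.
have [k [_ push_x _ _]] := push_loopP p adj x st out; rewrite (SC_run_cons _ push_x).
have [u ->] := IHt (x :: drop k st) (out ++ take k st).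
by exists (take k st ++ u); rewrite catA.
Qed.

Definition at_most_one_above (a : nat) (s : seq nat) :=
  {in s &, forall y z, a < y -> a < z -> y = z}.

Lemma sorted_insert (X Y : seq nat) a :
  all (fun x => x < a) X -> all (fun y => a <= y) Y ->
  sorted leq (X ++ a :: Y) = sorted leq (X ++ Y).
Proof.
move=> X_lt Y_ge; rewrite !(sorted_pairwise leq_trans) !pairwise_cat pairwise_cons.
rewrite allrel_consr Y_ge.
have -> : all (leq^~ a) X by apply: sub_all X_lt => x /ltnW.
have -> : allrel leq X Y by apply/allrelP => x y /(allP X_lt) ? /(allP Y_ge); lia.
by [].
Qed.

Lemma sorted_cat_cons_le (X Y : seq nat) a z :
  sorted leq (X ++ a :: Y) -> z \in X -> z <= a.
Proof.
rewrite (sorted_pairwise leq_trans) pairwise_cat allrel_consr.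
by case/and3P => /andP[/allP le_a _] _ _ /le_a.
Qed.

Notation run21 := (SC_run [:: 2; 1] [::]).

Lemma push21P x out st : sorted leq st -> exists k, [/\
  push_loop [:: 2; 1] [::] x st out = (x :: drop k st, out ++ take k st),
  all (fun y => y < x) (take k st) & sorted leq (x :: drop k st)].
Proof.
move=> sorted_st; have [k [le_k push_x avoid pop]] := push_loopP [:: 2; 1] [::] x st out.
exists k; split => //.
  apply/(all_nthP 0) => i; rewrite size_takel // => lt_ik; rewrite nth_take //.
  have := pop i lt_ik; have := drop_sorted i sorted_st.
  rewrite vcontains_21 (drop_nth 0 (leq_trans lt_ik le_k)) /= => ->.
  by rewrite andbT -ltnNge.
case: (ltnP k (size st)) => [/avoid|ge_k]; first by rewrite vcontains_21 negbK.
by rewrite drop_oversize.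
Qed.

Definition west_inv (st out : seq nat) :=
  sorted leq st /\ {in out, forall z, has (fun w => z < w) st}.

Lemma west_run_inv t st out : west_inv st out ->
  west_inv (run21 t st out).1 (run21 t st out).2.
Proof.
elim: t st out => [|x t IHt] st out //= [sorted_st below].
have [k [push_x popped sorted_st']] := push21P x out sorted_st.
rewrite (SC_run_cons _ push_x); apply: IHt; split=> // z.
rewrite mem_cat => /orP[/below /hasP [w w_in lt_zw]|/(allP popped) lt_zx].
  rewrite -(cat_take_drop k st) mem_cat in w_in; case/orP: w_in => w_in.
    by apply/hasP; exists x; [exact: mem_head | have := allP popped w w_in; lia].
  by apply/hasP; exists w; rewrite // inE w_in orbT.
by apply/hasP; exists x; first exact: mem_head.
Qed.

Lemma west_sE W : west_s W = (run21 W [::] [::]).2 ++ (run21 W [::] [::]).1.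
Proof. exact: SC_auxE. Qed.

Lemma sorted_west_rcons W a : a \notin W -> at_most_one_above a W ->
  sorted leq (west_s (rcons W a)) = sorted leq (west_s W).
Proof.
move=> a_notin one_above; rewrite !west_sE -cats1 SC_run_cat.
have inv0 : west_inv [::] [::] by [].
have := west_run_inv W inv0.
have := SC_run_perm [:: 2; 1] [::] W [::] [::].
case: (run21 W _ _) => st out /= perm_W [sorted_st below].
have [k [push_a popped ge_a]] := push21P a out sorted_st.
rewrite (SC_run_cons _ push_a) /SC_run /= sorted_insert.
- by rewrite -catA cat_take_drop.
(* An output entry lies below a stack entry, so if it exceeded a, two
   entries of W would exceed a. *)
- rewrite all_cat popped andbT; apply/allP => z z_out.
  have [w w_st lt_zw] := hasP (below z z_out).
  have z_W : z \in W by rewrite -(perm_mem perm_W) mem_cat z_out.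
  have w_W : w \in W by rewrite -(perm_mem perm_W) mem_cat w_st orbT.
  have : z != a by apply: contraNneq a_notin => <-.
  case: ltngtP => // lt_az _.
  by have := one_above z w z_W w_W lt_az (ltn_trans lt_az lt_zw); lia.
- by move: ge_a; rewrite /= (path_sortedE leq_trans) => /andP[].
Qed.

Lemma west_run_out_lt W st out y z : y \in out ++ st -> z \in W -> y < z ->
  y \in (run21 W st out).2.
Proof.
elim: W st out => [|x W IHW] st out //= y_in /predU1P z_in lt_yz.
have [k [_ push_x avoid _]] := push_loopP [:: 2; 1] [::] x st out.
rewrite (SC_run_cons _ push_x).
have [y_pre|y_post] : y \in out ++ take k st \/ y \in drop k st.
  by apply/orP; rewrite -mem_cat -catA cat_take_drop.
- case: z_in => [_|z_W]; last by apply: IHW z_W lt_yz; rewrite mem_cat y_pre.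
  have [u ->] := SC_run_out [:: 2; 1] [::] W (x :: drop k st) (out ++ take k st).
  by rewrite mem_cat y_pre.
- case: z_in => [eq_zx|z_W]; last by apply: IHW z_W lt_yz; rewrite mem_cat inE y_post !orbT.
  have lt_k : k < size st by rewrite ltnNge; apply: contraL y_post => /drop_oversize ->.
  move/avoid: lt_k; rewrite vcontains_21 negbK -eq_zx /= (path_sortedE leq_trans).
  by case/andP => /allP /(_ y y_post); lia.
Qed.

Lemma west_unsorted W1 W2 a y z : y \in W1 -> z \in W2 -> a < y -> y < z ->
  ~~ sorted leq (west_s (rcons (W1 ++ W2) a)).
Proof.
move=> y_W1 z_W2 lt_ay lt_yz; rewrite west_sE -cats1 !SC_run_cat.
have := SC_run_perm [:: 2; 1] [::] W1 [::] [::].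
case: (run21 W1 _ _) => st1 out1 /= perm_W1.
have y_out : y \in (run21 W2 st1 out1).2.
  by apply: west_run_out_lt z_W2 lt_yz; rewrite (perm_mem perm_W1).
case: (run21 W2 _ _) y_out => st out /= y_out.
have [k [_ push_a _ _]] := push_loopP [:: 2; 1] [::] a st out.
rewrite (SC_run_cons _ push_a) /SC_run /=; apply/negP => /sorted_cat_cons_le.
by move=> /(_ y); rewrite mem_cat y_out => /(_ isT); lia.
Qed.

Lemma has_3_21_small s : size s <= 2 -> ~ has_3_21 s.
Proof. by move=> small [i [j [*]]]; lia. Qed.

Lemma has_3_21_drop k s : has_3_21 (drop k s) -> has_3_21 s.
Proof.
move=> [i [j [lt_ij lt_js desc1 desc2]]].
rewrite size_drop !nth_drop addnS in lt_js desc1 desc2.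
by exists (k + i), (k + j); split => //; lia.
Qed.

Lemma has_3_21_cons_le x y r : x <= y -> has_3_21 [:: x, y & r] -> has_3_21 (y :: r).
Proof.
move=> le_xy [[|i] [[|[|j]] [/= lt_ij lt_js lt_j lt_j1]]] //; try lia.
- by exists 0, j.+1; split => //=; lia.
- by exists i, j.+1; split => //=; lia.
Qed.

Lemma has_3_21_max_cons m r : {in r, forall z, z < m} -> ~~ sorted leq r ->
  has_3_21 (m :: r).
Proof.
move=> lt_m /exists_descent [j [lt_jr desc]].
have lt_jm : nth 0 r j < m by apply/lt_m/mem_nth/ltnW.
by exists 0, j.+1; split => /=.
Qed.

Lemma has_3_21_rcons a s : at_most_one_above a s ->
  has_3_21 (rcons s a) <-> has_3_21 s.
Proof.
have nth_s n : n < size s -> nth 0 (rcons s a) n = nth 0 s n.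
  by move=> lt_ns; rewrite nth_rcons lt_ns.
move=> one_above; split=> [[i [j [lt_ij]]]|[i [j [lt_ij lt_js desc1 desc2]]]]; last first.
  have [lt_is lt_js'] : i < size s /\ j < size s by lia.
  by exists i, j; rewrite size_rcons !nth_s //; split => //; lia.
rewrite size_rcons ltnS => le_js; have [lt_is lt_js] : i < size s /\ j < size s by lia.
rewrite (nth_s i) // (nth_s j) //.
case: (ltnP j.+1 (size s)) => [lt_j1s|ge_j1s]; first by rewrite nth_s //; exists i, j.
rewrite nth_rcons (leq_gtF ge_j1s) (_ : j.+1 == size s) /=; last by apply/eqP; lia.
move=> desc1 lt_aj.
have eq_ij := one_above _ _ (mem_nth 0 lt_is) (mem_nth 0 lt_js) (ltn_trans lt_aj desc1) lt_aj.
by rewrite eq_ij ltnn in desc1.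
Qed.

Notation push321 := (push_loop [:: 3; 2; 1] [:: 1]).
Notation run321 := (SC_run [:: 3; 2; 1] [:: 1]).

Lemma push321_rcons x st a out : at_most_one_above a (x :: st) ->
  push321 x (rcons st a) out =
  (rcons (push321 x st out).1 a, (push321 x st out).2).
Proof.
elim: st out => [|y st IHst] out //= one_above.
have -> : vcontains [:: 3; 2; 1] [:: 1] [:: x, y & rcons st a] =
          vcontains [:: 3; 2; 1] [:: 1] [:: x, y & st].
  by apply/idP/idP => /vcontains_3_21 /(has_3_21_rcons one_above) /vcontains_3_21.
case: ifP => // _; apply: IHst; apply: sub_in2 one_above => z.
by rewrite !inE => /orP[] ->; rewrite ?orbT.
Qed.

Lemma SC_aux_321_rcons t st a out : at_most_one_above a (t ++ st) ->
  SC_aux [:: 3; 2; 1] [:: 1] t (rcons st a) out =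
  rcons (SC_aux [:: 3; 2; 1] [:: 1] t st out) a.
Proof.
elim: t st out => [|x t IHt] st out one_above /=; first by rewrite rcons_cat.
rewrite push321_rcons; last first.
  by apply: sub_in2 one_above => z; rewrite !inE mem_cat => /orP[] ->; rewrite ?orbT.
have [k [_ -> _ _]] := push_loopP [:: 3; 2; 1] [:: 1] x st out.
apply: IHt; apply: sub_in2 one_above => z; rewrite /= !inE !mem_cat.
by case/or3P => [->|->|/mem_drop ->]; rewrite ?orbT.
Qed.

Lemma SC_3_21_cons_small a t : at_most_one_above a t ->
  SC_3_21 (a :: t) = rcons (SC_3_21 t) a.
Proof. by move=> one_above; rewrite /SC_3_21 /SC -SC_aux_321_rcons ?cats0. Qed.

Lemma push321_bottomP x st0 a out : exists k, [/\ k <= size st0,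
  push321 x (rcons st0 a) out = (rcons (x :: drop k st0) a, out ++ take k st0),
  ~ has_3_21 (rcons (x :: drop k st0) a) &
  ~ has_3_21 (rcons st0 a) -> all (fun y => y < x) (take k st0)].
Proof.
have [k [le_k push_x avoid pop]] := push_loopP [:: 3; 2; 1] [:: 1] x (rcons st0 a) out.
have le_k0 : k <= size st0.
  rewrite leqNgt; apply/negP => /pop; rewrite drop_rcons // drop_size.
  by move/vcontains_3_21; apply: has_3_21_small.
have drop_k : drop k (rcons st0 a) = rcons (drop k st0) a := drop_rcons le_k0 a.
have take_k : take k (rcons st0 a) = take k st0 by rewrite -cats1 takel_cat.
exists k; split => //; first by rewrite push_x drop_k take_k.
  rewrite rcons_cons -drop_k => /vcontains_3_21; apply/negP/avoid.
  by rewrite size_rcons ltnS.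
move=> avoid_st; apply/(all_nthP 0) => i; rewrite size_takel // => lt_ik.
have lt_i : i < size st0 := leq_trans lt_ik le_k0.
rewrite nth_take // ltnNge; apply/negP => le_xy; apply: avoid_st.
apply: (has_3_21_drop (k := i)); move: (pop i lt_ik) => /vcontains_3_21.
rewrite (drop_nth 0) ?size_rcons 1?ltnW // nth_rcons lt_i.
exact: has_3_21_cons_le.
Qed.

Lemma drop_index_drop (T : eqType) (x : T) k s : x \notin take k s ->
  drop (index x (drop k s)) (drop k s) = drop (index x s) s.
Proof.
move=> x_take; rewrite -{3 4}(cat_take_drop k s) index_cat (negbTE x_take).
by rewrite drop_cat ltnNge leq_addr /= addKn.
Qed.

Section TwoLargerEntries.
Variables (a y m : nat).
Hypotheses (lt_ay : a < y) (lt_ym : y < m).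

(* Invariant of (stack, output) while reading t; at the end it places y
   before m in the output. *)
Definition order_inv (st out : seq nat) :=
  m \notin out /\ y \notin drop (index m st) st.

Lemma order_inv_push x st0 out k :
  x \notin out ++ rcons st0 a -> x <= m -> {in st0, forall w, w <= m} -> k <= size st0 ->
  all (fun w => w < x) (take k st0) -> ~ has_3_21 (rcons (x :: drop k st0) a) ->
  order_inv (rcons st0 a) out -> order_inv (rcons (x :: drop k st0) a) (out ++ take k st0).
Proof.
move=> x_new le_xm le_m le_k popped avoid [m_out y_below].
have m_take : m \notin take k st0 by apply/negP => /(allP popped); lia.
split; first by rewrite mem_cat negb_or m_out m_take.
rewrite rcons_cons /=; case: (eqVneq x m) => [eq_xm|ne_xm] /=; last first.
  by rewrite -drop_rcons // drop_index_drop // -cats1 takel_cat.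
rewrite inE negb_or eq_xm (ltn_eqF lt_ym) /= mem_rcons inE negb_or (gtn_eqF lt_ay) /=.
apply/negP => y_drop; apply: avoid; rewrite rcons_cons eq_xm; apply: has_3_21_max_cons.
  move=> w; rewrite mem_rcons inE => /predU1P[->|/mem_drop w_st0]; first lia.
  have w_ne : w != x.
    by apply: contraNneq x_new => <-; rewrite mem_cat mem_rcons inE w_st0 !orbT.
  by move: (le_m w w_st0); rewrite leq_eqVlt -eq_xm (negbTE w_ne).
rewrite -cats1; apply/negP => /sorted_cat_cons_le /(_ y_drop); lia.
Qed.

Lemma order_inv_run t st0 out :
  uniq (out ++ rcons st0 a ++ t) -> {in st0 ++ t, forall w, w <= m} ->
  ~ has_3_21 (rcons st0 a) -> order_inv (rcons st0 a) out ->
  exists st0', (run321 t (rcons st0 a) out).1 = rcons st0' a /\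
               order_inv (rcons st0' a) (run321 t (rcons st0 a) out).2.
Proof.
elim: t st0 out => [|x t IHt] st0 out uniq_all le_m avoid inv; first by exists st0.
have [k [le_k push_x avoid' popped]] := push321_bottomP x st0 a out.
have := push_loop_perm [:: 3; 2; 1] [:: 1] x (rcons st0 a) out.
rewrite push_x (SC_run_cons _ push_x) => /= perm_x.
have x_new : x \notin out ++ rcons st0 a.
  by move: uniq_all; rewrite catA cat_uniq => /and3P[_ /norP[]].
have le_m' : {in st0, forall w, w <= m} by move=> w w_st0; rewrite le_m // mem_cat w_st0.
apply: (IHt (x :: drop k st0)) => //.
- rewrite catA (perm_uniq (perm_cat perm_x (perm_refl t))).
  by rewrite -!catA cat1s.
- move=> w; rewrite /= inE mem_cat => /or3P[/eqP->|/mem_drop w_st0|w_t]; apply: le_m;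
    by rewrite mem_cat ?inE ?eqxx ?w_st0 ?w_t ?orbT.
- apply: order_inv_push => //; last exact: popped.
  by apply: le_m; rewrite mem_cat inE eqxx orbT.
Qed.

Lemma SC_3_21_cons_split t : uniq (a :: t) -> y \in t -> m \in t ->
  {in t, forall w, w <= m} ->
  exists W1 W2, [/\ SC_3_21 (a :: t) = rcons (W1 ++ W2) a, y \in W1 & m \in W2].
Proof.
move=> uniq_t y_t m_t le_m.
have inv0 : order_inv [:: a] [::].
  by split => //=; rewrite (ltn_eqF (ltn_trans lt_ay lt_ym)).
have [st0 []] := @order_inv_run t [::] [::] uniq_t le_m (@has_3_21_small [:: a] isT) inv0.
have := SC_run_perm [:: 3; 2; 1] [:: 1] t [:: a] [::].
rewrite /SC_3_21 /SC SC_auxE.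
rewrite (@SC_run_cons [:: 3; 2; 1] [:: 1] a t [::] [::] [:: a] [::] erefl).
case: (run321 t [:: a] [::]) => st out /= perm_t st_eq [m_out y_below]; subst st.
have in_out w : w \in t -> w \in out ++ rcons st0 a.
  by rewrite (perm_mem perm_t) inE => ->; rewrite orbT.
have m_st0 : m \in st0.
  move: (in_out m m_t); rewrite mem_cat (negbTE m_out) mem_rcons inE.
  by rewrite (gtn_eqF (ltn_trans lt_ay lt_ym)).
set i := index m st0; have lt_i : i < size st0 by rewrite index_mem.
exists (out ++ take i st0), (drop i st0); split.
- by rewrite -catA cat_take_drop rcons_cat.
- move: (in_out y y_t) y_below.
  rewrite -cats1 index_cat m_st0 -/i -{1}(cat_take_drop i st0) -!catA drop_cat lt_i.
  by rewrite catA mem_cat => /orP[// | ->].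
- by rewrite (drop_nth 0 lt_i) nth_index // mem_head.
Qed.

End TwoLargerEntries.

Lemma at_most_one_aboveP a s : count (fun y => a < y) s <= 1 -> at_most_one_above a s.
Proof.
move=> le1 y z y_s z_s lt_ay lt_az; apply/eqP; apply: contraTT le1 => ne_yz.
rewrite -ltnNge -size_filter (uniq_leq_size (s1 := [:: y; z])) //= ?inE ?ne_yz //.
by move=> w; rewrite !inE mem_filter => /predU1P[->|/eqP->]; apply/andP.
Qed.

Lemma exists_max (s : seq nat) x : x \in s -> exists2 m, m \in s & {in s, forall w, w <= m}.
Proof.
move=> x_s; have ub w : w \in s -> w <= \max_(v <- s) v by move=> w_s; apply: leq_bigmax_seq.
by case: (@ex_maxnP (mem s) _ (ex_intro _ x x_s) ub) => m; exists m.
Qed.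

Lemma sorted_west_SC_3_21 t : uniq t ->
  sorted leq (west_s (SC_3_21 t)) = ~~ exceeded_twice t.
Proof.
elim: t => [|a t IHt] // uniq_at; have /andP[a_t uniq_t] := uniq_at; rewrite /=.
case: ltnP => [gt1|le1]; last first.
  have one_above := at_most_one_aboveP le1.
  rewrite orbF SC_3_21_cons_small ?sorted_west_rcons ?IHt ?(perm_mem (SC_perm _ _ _)) //.
  by apply: sub_in2 one_above => w; rewrite (perm_mem (SC_perm _ _ _)).
rewrite orbT; have [j [k [lt_jk lt_kt lt_aj lt_ak]]] := count_gt1P 0 _ _ gt1.
have [m m_t le_m] := exists_max (mem_nth 0 lt_kt).
set y := if nth 0 t j == m then nth 0 t k else nth 0 t j.
have y_t : y \in t by rewrite /y; case: ifP => _; apply: mem_nth => //; lia.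
have lt_ay : a < y by rewrite /y; case: ifP.
have lt_ym : y < m.
  rewrite ltn_neqAle le_m // andbT /y.
  case: ifP => [/eqP <-|/negbT //]; rewrite nth_uniq //; lia.
have [W1 [W2 [-> y_W1 m_W2]]] := SC_3_21_cons_split lt_ay lt_ym uniq_at y_t m_t le_m.
by apply/negbTE; apply: west_unsorted y_W1 m_W2 lt_ay lt_ym.
Qed.

Theorem mainTheorem7 (n : nat) : 0 < n ->
  forall t : seq nat, in_Sort_n n t = in_Av_n_123_132 n t.
Proof.
move=> _ t; rewrite /in_Sort_n /in_Av_n_123_132.
case perm_t: (perm_eq t (iota 1 n)) => //=.
have uniq_t : uniq t by rewrite (perm_uniq perm_t) iota_uniq.
rewrite /avoids -negb_or contains_123_132 // -sorted_west_SC_3_21 //.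
have perm_sorted : perm_eq (west_s (SC_3_21 t)) (iota 1 n).
  by rewrite (perm_trans (SC_perm _ _ _)) // (perm_trans (SC_perm _ _ _)).
apply/eqP/idP => [->|sorted_out]; first exact: iota_sorted.
exact: (sorted_eq leq_trans anti_leq) sorted_out (iota_sorted 1 n) perm_sorted.
Qed.
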